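(* Let $R$ be an associative unital division ring over a field $F$ with $\operatorname{char} F=0$ (with $F$ contained in the center of $R$). Let $\varphi_{i,j}\in R$ for $i,j\in\mathbb{Z}_{\geq 0}$. For $l,m\in\mathbb{Z}_{\geq0}$ and $n\geq 1$ put $$\Theta_{l,m,n}=\bigl(\varphi_{l+i-1,\,m+j-1}\bigr)_{1\leq i,j\leq n},\qquad \theta_{l,m,n}=|\Theta_{l,m,n}|_{nn},$$ and adopt the convention $\theta_{l,m,0}^{-1}:=0$. Assume that all quasideterminants of all the matrices $\Theta_{l,m,n}$ and of their square submatrices occurring below are defined and that all $\theta_{l,m,n}$ ($n\geq1$) are invertible. Then for all $l,m\geq 0$ and $n\geq 1$, $$\theta_{l+1,m+1,n}=\theta_{l,m,n+1}+\theta_{l+1,m,n}\bigl(\theta_{l,m,n}^{-1}-\theta_{l+1,m+1,n-1}^{-1}\bigr)\theta_{l,m+1,n}.$$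
   Context: For an $n\times n$ matrix $X=(x_{ij})$ over $R$, let $X^{ij}$ denote the matrix obtained by deleting row $i$ and column $j$, $r_i^j$ the $i$-th row with the $j$-th entry removed, and $c_j^i$ the $j$-th column with the $i$-th entry removed. The quasideterminant is $|X|_{ij}=x_{ij}-r_i^j\,(X^{ij})^{-1}\,c_j^i$, defined when $X^{ij}$ is invertible; for $n=1$, $|X|_{11}=x_{11}$. *)

From HB Require Import structures.
From mathcomp Require Import all_boot all_order all_algebra.
From Stdlib Require Import ClassicalEpsilon.
Set Implicit Arguments. Unset Strict Implicit. Unset Printing Implicit Defensive.
Import Order.TTheory GRing.Theory Num.Theory.
Local Open Scope ring_scope.

Section Quasidet.
Variable R : unitRingType.

Definition mx_invertible n (A : 'M[R]_n) : Prop :=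
  exists B : 'M[R]_n, A *m B = 1%:M /\ B *m A = 1%:M.

(* a (the, when it exists: two-sided inverses are unique) inverse of A;
   arbitrary when A is not invertible *)
Definition mx_inv n (A : 'M[R]_n) : 'M[R]_n :=
  epsilon (inhabits 0) (fun B : 'M[R]_n => A *m B = 1%:M /\ B *m A = 1%:M).

Definition delmx n (X : 'M[R]_n.+1) (i j : 'I_n.+1) : 'M[R]_n :=
  \matrix_(a, b) X (lift i a) (lift j b).
Definition delrow n (X : 'M[R]_n.+1) (i j : 'I_n.+1) : 'rV[R]_n :=
  \row_b X i (lift j b).
Definition delcol n (X : 'M[R]_n.+1) (i j : 'I_n.+1) : 'cV[R]_n :=
  \col_a X (lift i a) j.

Definition qdet_defined n (X : 'M[R]_n.+1) (i j : 'I_n.+1) : Prop :=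
  mx_invertible (delmx X i j).

Definition qdet n (X : 'M[R]_n.+1) (i j : 'I_n.+1) : R :=
  X i j - (delrow X i j *m mx_inv (delmx X i j) *m delcol X i j) 0 0.

(* Theta_{l,m,n} = (phi_{l+i-1, m+j-1})_{1<=i,j<=n}  (0-indexed here) *)
Definition Theta (phi : nat -> nat -> R) (l m n : nat) : 'M[R]_n :=
  \matrix_(i < n, j < n) phi (l + i)%N (m + j)%N.

(* theta_{l,m,n} = |Theta_{l,m,n}|_{nn} for n >= 1 (value 0 for n = 0, unused) *)
Definition theta (phi : nat -> nat -> R) (l m n : nat) : R :=
  match n with
  | 0 => 0
  | k.+1 => qdet (Theta phi l m k.+1) ord_max ord_max
  end.

Definition theta_inv (phi : nat -> nat -> R) (l m n : nat) : R :=
  match n with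
  | 0 => 0
  | k.+1 => (theta phi l m k.+1)^-1
  end.

End Quasidet.

From HB Require Import structures.
From mathcomp Require Import all_boot all_order all_algebra.
From mathcomp Require Import zify.
From Stdlib Require Import ClassicalEpsilon.
Import GRing.Theory.
Local Open Scope ring_scope.

(* If Theta_{L,M,k} is invertible, there is a unique combination c of the rows
   L, ..., L+k of phi with c_{L+k} = 1 that vanishes on the columns
   M, ..., M+k-1, and its value on column M+k is theta_{L,M,k+1}.  A combination
   of the k rows L, ..., L+k-1 vanishing on those k columns is zero, so three
   suitable linear combinations of such kernel vectors vanish identically once
   their last coefficient and their value on one more column are checked to be
   zero.  Evaluating the resulting identities on column m+n gives the
   recurrence. *)

Section ThetaRows.
Variables (R : unitRingType) (phi : nat -> nat -> R) (N : nat).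

Lemma mx_invP n (A : 'M[R]_n) :
  mx_invertible A -> A *m mx_inv A = 1%:M /\ mx_inv A *m A = 1%:M.
Proof. exact: epsilon_spec. Qed.

Lemma delmx_Theta L M k :
  delmx (Theta phi L M k.+1) ord_max ord_max = Theta phi L M k.
Proof. by apply/matrixP => i j; rewrite !mxE !lift_max. Qed.

(* Truncating at row N is harmless: every vector used below is supported below N. *)
Definition rowcomb (c : nat -> R) (j : nat) : R := \sum_(i < N) c i * phi i j.

Definition supported (c : nat -> R) (L T : nat) : Prop :=
  forall i, (i < L)%N || (T <= i)%N -> c i = 0.

Definition annihilates (c : nat -> R) (M k : nat) : Prop :=
  forall j, (M <= j < M + k)%N -> rowcomb c j = 0.

Lemma supportedW {c L T L' T'} :
  supported c L T -> (L' <= L)%N -> (T <= T')%N -> supported c L' T'.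
Proof. by move=> sc leL leT i hi; apply: sc; move: hi; lia. Qed.

Lemma annihilatesW {c M k M' k'} :
  annihilates c M k -> (M <= M')%N -> (M' + k' <= M + k)%N -> annihilates c M' k'.
Proof. by move=> kc leM lek j hj; apply: kc; move: hj; lia. Qed.

Lemma rowcomb_supported {c L k} j :
  supported c L (L + k) -> (L + k <= N)%N ->
  rowcomb c j = \sum_(a < k) c (L + a)%N * phi (L + a)%N j.
Proof.
move=> sc leN; rewrite /rowcomb -(big_mkord xpredT (fun i => c i * phi i j)).
rewrite (@big_cat_nat _ _ _ L) /=; [|by []|by lia].
rewrite big1_seq ?add0r => [|i /andP[_]]; last first.
  by rewrite mem_index_iota => /andP[_ iL]; rewrite sc ?iL ?mul0r.
rewrite (@big_cat_nat _ _ _ (L + k)) /= ?leq_addr //.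
rewrite [X in _ + X]big1_seq ?addr0 => [|i /andP[_]]; last first.
  by rewrite mem_index_iota => /andP[kLi _]; rewrite sc ?kLi ?orbT ?mul0r.
rewrite -{1}[L]add0n big_addn addKn big_mkord.
by apply: eq_bigr => a _; rewrite addnC.
Qed.

Lemma rowcomb_kernel_eq0 {L M k d} :
  mx_invertible (Theta phi L M k) -> (L + k <= N)%N ->
  supported d L (L + k) -> annihilates d M k -> forall j, rowcomb d j = 0.
Proof.
move=> [B [ThB _]] leN sd kd j.
pose dL : 'rV[R]_k := \row_a d (L + a)%N.
have dL_ker : dL *m Theta phi L M k = 0.
  apply/matrixP => i b; rewrite !mxE.
  transitivity (rowcomb d (M + b)); last by apply: kd; rewrite leq_addr ltn_add2l ltn_ord.
  by rewrite (rowcomb_supported _ sd) //; apply: eq_bigr => a _; rewrite !mxE.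
have dL0 : dL = 0 by rewrite -[dL]mulmx1 -ThB mulmxA dL_ker mul0mx.
rewrite (rowcomb_supported _ sd) // big1 // => a _.
by have := congr1 (fun v : 'rV_k => v 0 a) dL0; rewrite !mxE => ->; rewrite mul0r.
Qed.

Lemma rowcomb3_eq0 {L M k} {c1 c2 c3 : R} {a b e : nat -> R} :
  mx_invertible (Theta phi L M k.+1) -> (L + k.+1 < N)%N ->
  supported a L (L + k.+1).+1 -> supported b L (L + k.+1).+1 ->
  supported e L (L + k.+1).+1 ->
  annihilates a M k -> annihilates b M k -> annihilates e M k ->
  c1 * a (L + k.+1)%N + c2 * b (L + k.+1)%N + c3 * e (L + k.+1)%N = 0 ->
  c1 * rowcomb a (M + k) + c2 * rowcomb b (M + k) + c3 * rowcomb e (M + k) = 0 ->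
  forall j, c1 * rowcomb a j + c2 * rowcomb b j + c3 * rowcomb e j = 0.
Proof.
move=> invTh ltN sa sb se ka kb ke top last.
pose d i := c1 * a i + c2 * b i + c3 * e i.
have rowcomb_d j :
    rowcomb d j = c1 * rowcomb a j + c2 * rowcomb b j + c3 * rowcomb e j.
  rewrite /rowcomb !mulr_sumr -!big_split.
  by apply: eq_bigr => i _; rewrite !mulrDl !mulrA.
move=> j; rewrite -rowcomb_d; apply: (rowcomb_kernel_eq0 invTh); first exact: ltnW.
- move=> i /orP[iL|]; first by rewrite /d sa ?sb ?se ?iL ?mulr0 ?addr0.
  rewrite leq_eqVlt => /orP[/eqP<- //|kLi].
  by rewrite /d sa ?sb ?se ?kLi ?orbT ?mulr0 ?addr0.
- move=> i /andP[Mi]; rewrite addnS ltnS leq_eqVlt rowcomb_d.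
  case/orP=> [/eqP-> //|iMk].
  by rewrite ka ?kb ?ke ?Mi ?iMk ?mulr0 ?addr0.
Qed.

Definition theta_coef L M k : 'rV[R]_k :=
  - (delrow (Theta phi L M k.+1) ord_max ord_max *m mx_inv (Theta phi L M k)).

Definition theta_row L M k (i : nat) : R :=
  if (i < L)%N then 0 else
  if insub (i - L)%N is Some a then theta_coef L M k 0 a else ((i - L)%N == k)%:R.

Lemma theta_row_supported L M k : supported (theta_row L M k) L (L + k).+1.
Proof.
move=> i /orP[iL|kLi]; rewrite /theta_row ?iL // ifF; last by apply/negbTE; lia.
by rewrite insubF; [case: eqP => //; lia | apply/negbTE; lia].
Qed.

Lemma theta_row_last L M k : theta_row L M k (L + k) = 1.
Proof. by rewrite /theta_row ltnNge leq_addr insubF addKn ?ltnn ?eqxx. Qed.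

Lemma rowcomb_theta_row L M k j : (L + k < N)%N ->
  rowcomb (theta_row L M k) j =
  \sum_(a < k) theta_coef L M k 0 a * phi (L + a)%N j + phi (L + k)%N j.
Proof.
move=> ltN; have sc : supported (theta_row L M k) L (L + k.+1).
  by rewrite addnS; apply: theta_row_supported.
rewrite (rowcomb_supported _ sc) ?addnS // big_ord_recr /= theta_row_last mul1r.
congr (_ + _); apply: eq_bigr => a _.
by rewrite /theta_row ltnNge leq_addr /= addKn valK.
Qed.

Lemma rowcomb_theta_row0 L M j : (L < N)%N ->
  rowcomb (theta_row L M 0) j = phi L j.
Proof. by move=> ltN; rewrite rowcomb_theta_row addn0 // big_ord0 add0r. Qed.

Lemma theta_row_annihilates {L M k} :
  mx_invertible (Theta phi L M k) -> (L + k < N)%N ->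
  annihilates (theta_row L M k) M k.
Proof.
move=> /mx_invP[_ invTh] ltN j /andP[Mj jMk].
have ltjk : (j - M < k)%N by lia.
have coefTh : theta_coef L M k *m Theta phi L M k =
              - delrow (Theta phi L M k.+1) ord_max ord_max.
  by rewrite mulNmx -mulmxA invTh mulmx1.
rewrite rowcomb_theta_row // -[j](subnKC Mj).
have := congr1 (fun v : 'rV_k => v 0 (Ordinal ltjk)) coefTh.
rewrite !mxE lift_max /= => coef_j.
rewrite (_ : \sum_(a < k) _ = - phi (L + k)%N (M + (j - M))%N) ?addNr // -coef_j.
by apply: eq_bigr => a _; rewrite !mxE.
Qed.

Lemma rowcomb_theta_row_theta L M k : (L + k < N)%N ->
  rowcomb (theta_row L M k) (M + k) = theta phi L M k.+1.
Proof.
move=> ltN; rewrite rowcomb_theta_row // /theta /qdet delmx_Theta addrC.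
rewrite mxE /=; congr (_ + _).
transitivity ((theta_coef L M k *m delcol (Theta phi L M k.+1) ord_max ord_max) 0 0).
  by rewrite mxE; apply: eq_bigr => a _; rewrite !mxE lift_max.
by rewrite mulNmx mxE.
Qed.

Hypothesis Theta_invertible : forall L M k, mx_invertible (Theta phi L M k).
Hypothesis theta_unit : forall L M k, theta phi L M k.+1 \is a GRing.unit.

Lemma rowcomb_theta_row_extend l m k j : (l + k.+1 < N)%N ->
  rowcomb (theta_row l m k.+1) j =
  rowcomb (theta_row l.+1 m k) j
  - theta phi l.+1 m k.+1 * theta_inv phi l m k.+1 * rowcomb (theta_row l m k) j.
Proof.
move=> ltN.
suff: 1 * rowcomb (theta_row l m k.+1) j + -1 * rowcomb (theta_row l.+1 m k) j
      + theta phi l.+1 m k.+1 * theta_inv phi l m k.+1 * rowcomb (theta_row l m k) j = 0.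
  by rewrite mul1r mulN1r -addrA => /eqP; rewrite addr_eq0 opprD opprK => /eqP.
apply: (rowcomb3_eq0 (Theta_invertible l m k.+1) ltN).
- exact: theta_row_supported.
- by apply: (supportedW (theta_row_supported _ _ _)); lia.
- by apply: (supportedW (theta_row_supported _ _ _)); lia.
- by apply: (annihilatesW (theta_row_annihilates (Theta_invertible _ _ _) _)); lia.
- by apply: (theta_row_annihilates (Theta_invertible _ _ _)); lia.
- by apply: (theta_row_annihilates (Theta_invertible _ _ _)); lia.
- rewrite theta_row_last -addSnnS theta_row_last [theta_row l m k _]theta_row_supported.
    by rewrite mul1r mulN1r mulr0 addr0 subrr.
  by lia.
- rewrite (theta_row_annihilates (Theta_invertible l m k.+1)) ?rowcomb_theta_row_theta;
    try lia.
  by rewrite mulr0 add0r mulN1r divrK ?addNr ?theta_unit.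
Qed.

Lemma rowcomb_theta_row_shift l m k j : (l + k.+1 < N)%N ->
  rowcomb (theta_row l.+1 m.+1 k) j =
  rowcomb (theta_row l.+1 m k) j
  - theta phi l.+1 m k.+1 * theta_inv phi l.+1 m.+1 k
    * rowcomb (theta_row l.+1 m.+1 k.-1) j.
Proof.
case: k => [|k] ltN.
  by rewrite mulr0 mul0r subr0 !rowcomb_theta_row0 //; lia.
suff: 1 * rowcomb (theta_row l.+1 m.+1 k.+1) j + -1 * rowcomb (theta_row l.+1 m k.+1) j
      + theta phi l.+1 m k.+2 * theta_inv phi l.+1 m.+1 k.+1
        * rowcomb (theta_row l.+1 m.+1 k) j = 0.
  by rewrite mul1r mulN1r -addrA => /eqP; rewrite addr_eq0 opprD opprK => /eqP.
apply: (rowcomb3_eq0 (Theta_invertible l.+1 m.+1 k.+1)); first by lia.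
- exact: theta_row_supported.
- exact: theta_row_supported.
- by apply: (supportedW (theta_row_supported _ _ _)); lia.
- by apply: (annihilatesW (theta_row_annihilates (Theta_invertible _ _ _) _)); lia.
- by apply: (annihilatesW (theta_row_annihilates (Theta_invertible _ _ _) _)); lia.
- by apply: (theta_row_annihilates (Theta_invertible _ _ _)); lia.
- rewrite !theta_row_last [theta_row l.+1 m.+1 k _]theta_row_supported; last by lia.
  by rewrite mul1r mulN1r mulr0 addr0 subrr.
- rewrite (theta_row_annihilates (Theta_invertible l.+1 m.+1 k.+1)); try lia.
  rewrite rowcomb_theta_row_theta ?addSnnS ?rowcomb_theta_row_theta; try lia.
  by rewrite mulr0 add0r mulN1r divrK ?addNr ?theta_unit.
Qed.

Lemma rowcomb_theta_row_exchange l m k j : (l + k < N)%N ->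
  theta_inv phi l m k.+1 * rowcomb (theta_row l m k) j
  - theta_inv phi l.+1 m.+1 k * rowcomb (theta_row l.+1 m.+1 k.-1) j =
  (theta_inv phi l m k.+1 - theta_inv phi l.+1 m.+1 k) * rowcomb (theta_row l m.+1 k) j.
Proof.
case: k => [|k] ltN.
  by rewrite mul0r !subr0 !rowcomb_theta_row0 //; lia.
suff: theta_inv phi l m k.+2 * rowcomb (theta_row l m k.+1) j
      + - theta_inv phi l.+1 m.+1 k.+1 * rowcomb (theta_row l.+1 m.+1 k) j
      + - (theta_inv phi l m k.+2 - theta_inv phi l.+1 m.+1 k.+1)
        * rowcomb (theta_row l m.+1 k.+1) j = 0.
  by rewrite !mulNr => /eqP; rewrite subr_eq0 => /eqP.
apply: (rowcomb3_eq0 (Theta_invertible l m.+1 k.+1) ltN).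
- exact: theta_row_supported.
- by apply: (supportedW (theta_row_supported _ _ _)); lia.
- exact: theta_row_supported.
- by apply: (annihilatesW (theta_row_annihilates (Theta_invertible _ _ _) _)); lia.
- by apply: (theta_row_annihilates (Theta_invertible _ _ _)); lia.
- by apply: (annihilatesW (theta_row_annihilates (Theta_invertible _ _ _) _)); lia.
- rewrite theta_row_last -addSnnS theta_row_last addSnnS theta_row_last.
  by rewrite !mulr1 subrr.
- rewrite (theta_row_annihilates (Theta_invertible l m.+1 k.+1)); try lia.
  rewrite rowcomb_theta_row_theta addSnnS ?rowcomb_theta_row_theta; try lia.
  by rewrite mulr0 addr0 mulNr !mulVr ?theta_unit ?subrr.
Qed.

End ThetaRows.

Theorem proposition3p1
  (F : fieldType) (R : unitAlgType F)
  (charF0 : [pchar F] =i pred0)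
  (R_division : forall x : R, x != 0 -> x \is a GRing.unit)
  (phi : nat -> nat -> R)
  (* all quasideterminants of all square submatrices (rows and columns chosen
     by strictly increasing index maps, including the full matrix) of every
     Theta_{l,m,n} are defined *)
  (Hdef : forall (l m n k : nat) (f g : 'I_k.+1 -> 'I_n),
      (forall a b : 'I_k.+1, (a < b)%N -> (f a < f b)%N) ->
      (forall a b : 'I_k.+1, (a < b)%N -> (g a < g b)%N) ->
      forall i j : 'I_k.+1, qdet_defined (mxsub f g (Theta phi l m n)) i j)
  (* all theta_{l,m,n}, n >= 1, are invertible *)
  (Hinv : forall l m n : nat, (0 < n)%N -> theta phi l m n \is a GRing.unit)
  (l m n : nat) (hn : (1 <= n)%N) :
  theta phi l.+1 m.+1 n =
    theta phi l m n.+1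
    + theta phi l.+1 m n * (theta_inv phi l m n - theta_inv phi l.+1 m.+1 n.-1)
      * theta phi l m.+1 n.
Proof.
have Theta_invertible L M k : mx_invertible (Theta phi L M k).
  have := Hdef L M k.+1 k id id (fun _ _ => id) (fun _ _ => id) ord_max ord_max.
  by rewrite /qdet_defined mxsub_id delmx_Theta.
have theta_unit L M k : theta phi L M k.+1 \is a GRing.unit by exact: Hinv.
case: n hn => [//|k] _; rewrite [k.+1.-1]/=.
pose N := (l + k).+2; have ltN : (l + k.+1 < N)%N by rewrite addnS.
rewrite -(rowcomb_theta_row_theta _ _ N l.+1 m.+1 k) 1?addSnnS; last by lia.
rewrite -(rowcomb_theta_row_theta _ _ N l m k.+1) //.
rewrite -(rowcomb_theta_row_theta _ _ N l m.+1 k) 1?addSnnS; last by lia.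
rewrite (rowcomb_theta_row_shift _ _ N Theta_invertible theta_unit) //.
rewrite (rowcomb_theta_row_extend _ _ N Theta_invertible theta_unit) //.
rewrite -[_ * (_ - _) * _]mulrA.
rewrite -(rowcomb_theta_row_exchange _ _ N Theta_invertible theta_unit); last by lia.
by rewrite mulrBr !mulrA addrA subrK.
Qed.
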